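(* Let $\mathbf{u}$ be quasi-definite with SMOP $(P_n)_{n\ge0}$ satisfying $xP_n=P_{n+1}+b_nP_n+a_nP_{n-1}$, let $c\in\mathbb{C}$, and let $\widehat{\mathbf{u}}$ be a quasi-definite linear functional with $\mathbf{u}=(x-c)^2\widehat{\mathbf{u}}$ and SMOP $(Q_n)_{n\ge0}$. Write $Q_n=P_n+\sum_{m=0}^{n-1}\alpha_{n,m}P_m$ (then $\alpha_{n,m}=0$ for $m\le n-3$ and $\alpha_{n,n-2}\ne0$ for $n\ge2$), with the convention $\alpha_{0,-1}=0$. Then $(Q_n)$ satisfies $xQ_n=Q_{n+1}+\widehat b_nQ_n+\widehat a_nQ_{n-1}$, $Q_{-1}=0$, $Q_0=1$, where $$\widehat b_n=b_n+\alpha_{n,n-1}-\alpha_{n+1,n}\ (n\ge0),\qquad \widehat a_n=\frac{\alpha_{n,n-2}}{\alpha_{n-1,n-3}}\,a_{n-2}\ (n\ge3),$$ $$\widehat a_2=\frac{\mathbf{u}_0\widehat{\mathbf{u}}_0\,\alpha_{2,0}}{\mathbf{u}_0\widehat{\mathbf{u}}_0-(\widehat{\mathbf{u}}_1-c\widehat{\mathbf{u}}_0)^2},\qquad \widehat a_1=\frac{\mathbf{u}_0\widehat{\mathbf{u}}_0-(\widehat{\mathbf{u}}_1-c\widehat{\mathbf{u}}_0)^2}{\widehat{\mathbf{u}}_0^2}.$$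
   Context: Linear functionals on complex polynomials, moments $\mathbf{u}_n=\langle\mathbf{u},x^n\rangle$, $\langle(x-c)^2\widehat{\mathbf{u}},p\rangle=\langle\widehat{\mathbf{u}},(x-c)^2p\rangle$. Quasi-definite: all leading principal submatrices of the Hankel moment matrix are nonsingular; then there is a unique sequence of monic orthogonal polynomials (SMOP) $(P_n)$, $\deg P_n=n$, $\langle\mathbf{u},P_nP_m\rangle=K_n\delta_{nm}$, $K_n\neq0$, satisfying a three-term recurrence $xP_n=P_{n+1}+b_nP_n+a_nP_{n-1}$, $P_{-1}=0,P_0=1$, $a_n\ne0$. *)

From HB Require Import structures.
From mathcomp Require Import all_boot all_order all_algebra.
From mathcomp Require Import complex.
From mathcomp Require Import reals.
Set Implicit Arguments. Unset Strict Implicit. Unset Printing Implicit Defensive.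
Import Order.TTheory GRing.Theory Num.Theory.
Local Open Scope ring_scope.

(* A linear functional on polynomials over a field C, given by its moment
   sequence m : <m, x^n> = m n, extended linearly. *)
Definition lfun (C : fieldType) (m : nat -> C) (p : {poly C}) : C :=
  \sum_(i < size p) p`_i * m i.

Definition hankel (C : fieldType) (m : nat -> C) (n : nat) : 'M[C]_n.+1 :=
  \matrix_(i < n.+1, j < n.+1) m (i + j)%N.

Definition quasi_definite (C : fieldType) (m : nat -> C) : Prop :=
  forall n : nat, \det (hankel m n) != 0.

Definition is_SMOP (C : fieldType) (m : nat -> C) (P : nat -> {poly C}) : Prop :=
  (forall n, P n \is monic) /\ (forall n, size (P n) = n.+1) /\
  (forall n k, n != k -> lfun m (P n * P k) = 0) /\
  (forall n, lfun m (P n * P n) != 0).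

Definition prevP (C : fieldType) (P : nat -> {poly C}) (n : nat) : {poly C} :=
  if n is k.+1 then P k else 0.

Definition hat_b (C : fieldType) (b : nat -> C) (alpha : nat -> nat -> C)
    (n : nat) : C :=
  b n + (if n is k.+1 then alpha n k else 0) - alpha n.+1 n.

(* hat a_n ; the value at n = 0 is irrelevant (it multiplies Q_{-1} = 0) *)
Definition hat_a (C : fieldType) (u uh : nat -> C) (c : C) (a : nat -> C)
    (alpha : nat -> nat -> C) (n : nat) : C :=
  let D := u 0%N * uh 0%N - (uh 1%N - c * uh 0%N) ^+ 2 in
  match n with
  | 0 => 0
  | 1 => D / (uh 0%N) ^+ 2
  | 2 => u 0%N * uh 0%N * alpha 2%N 0%N / D
  | k.+3 => alpha k.+3 k.+1 / alpha k.+2 k * a k.+1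
  end.

From HB Require Import structures.
From mathcomp Require Import all_boot all_order all_algebra.
From mathcomp Require Import complex.
From mathcomp Require Import reals.
From mathcomp Require Import ring zify.
Set Implicit Arguments. Unset Strict Implicit. Unset Printing Implicit Defensive.
Import Order.TTheory GRing.Theory Num.Theory.
Local Open Scope ring_scope.

(* The argument is the classical one for monic orthogonal polynomials.
   1. lfun m is a linear form on polynomials; a monic sequence with deg P_n = n
      is a basis, so P_n is m-orthogonal to every polynomial of degree < n and
      pairing P_n with p of degree <= n extracts p_n K_n, K_n = <m, P_n^2>.
   2. Hence every SMOP satisfies X P_n = P_{n+1} + beta_n P_n + gamma_n P_{n-1},
      where beta_n is the gap of the degree-n coefficients of X P_n and P_{n+1}
      and gamma_n = K_n / K_{n-1}; conversely the coefficients b_n, a_n of a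
      given recurrence are these quantities, and K_{n+1} = a_{n+1} K_n.
   3. For u = w uh with w = (x - c)^2, alpha_{n,m} K_m = <u, Q_n P_m>
      = <uh, Q_n (w P_m)>; as w P_m is monic of degree m + 2 this vanishes for
      m + 3 <= n and equals hat K_{m+2} for n = m + 2.  Together with the
      2x2 Hankel identity uh_0 hat K_1 = uh_0 uh_2 - uh_1^2 this identifies
      the formulas for hat b_n and hat a_n with beta_n and gamma_n of step 2
      for the sequence Q, which proves the theorem. *)

Section LinearFunctional.
Variables (C : fieldType) (m : nat -> C).

Lemma lfunE (p : {poly C}) n :
  (size p <= n)%N -> lfun m p = \sum_(i < n) p`_i * m i.
Proof.
move=> hn; rewrite /lfun (big_ord_widen _ (fun i => p`_i * m i) hn).
rewrite big_mkcond /=; apply: eq_bigr => i _.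
by case: ltnP => // hi; rewrite nth_default // mul0r.
Qed.

Lemma lfun_is_linear : linear_for *%R (lfun m).
Proof.
move=> k p q; pose n := maxn (size p) (size q).
have hpq : (size (k *: p + q)%R <= n)%N.
  rewrite (leq_trans (size_polyD _ _)) // geq_max leq_maxr.
  by rewrite (leq_trans (size_scale_leq _ _)) ?leq_maxl.
rewrite (lfunE hpq) (lfunE (leq_maxl _ _ : size p <= n)%N).
rewrite (lfunE (leq_maxr _ _ : size q <= n)%N) mulr_sumr -big_split.
by apply: eq_bigr => i _; rewrite coefD coefZ mulrDl mulrA.
Qed.

HB.instance Definition _ :=
  GRing.isLinear.Build C {poly C} C *%R (lfun m) lfun_is_linear.

Lemma lfunXn k : lfun m 'X^k = m k.
Proof.
rewrite /lfun size_polyXn big_ord_recr /= coefXn eqxx mul1r big1 ?add0r //.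
by move=> i _; rewrite coefXn /= (ltn_eqF (ltn_ord i)) mul0r.
Qed.

Lemma lfun1 : lfun m 1 = m 0%N.
Proof. by rewrite -lfunXn expr0. Qed.

Lemma lfunX : lfun m 'X = m 1%N.
Proof. by rewrite -lfunXn expr1. Qed.

Lemma lfunCM (k : C) (p : {poly C}) : lfun m (k%:P * p) = k * lfun m p.
Proof. by rewrite mul_polyC linearZ. Qed.

Lemma lfunC (k : C) : lfun m k%:P = k * m 0%N.
Proof. by rewrite -[k%:P]mulr1 lfunCM lfun1. Qed.

End LinearFunctional.

Lemma size_sub_monic (C : fieldType) (q p : {poly C}) n :
  q \is monic -> size q = n.+1 -> (size p <= n.+1)%N ->
  (size (p - p`_n *: q)%R <= n)%N.
Proof.
move=> q_monic q_size p_size; apply/leq_sizeP => j; rewrite leq_eqVlt.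
have q_top : q`_n = 1 by rewrite -(monicP q_monic) lead_coefE q_size.
case/predU1P => [<-|gt_jn]; first by rewrite coefB coefZ q_top mulr1 subrr.
apply: nth_default; rewrite (leq_trans (size_polyD _ _)) // geq_max.
by rewrite (leq_trans p_size) // size_polyN (leq_trans (size_scale_leq _ _)) ?q_size.
Qed.

Section MonicBasis.
Variables (C : fieldType) (P : nat -> {poly C}).
Hypotheses (P_monic : forall n, P n \is monic)
           (P_size : forall n, size (P n) = n.+1).

Lemma coef_top n : (P n)`_n = 1.
Proof. by rewrite -(monicP (P_monic n)) lead_coefE P_size. Qed.

Lemma basis0 : P 0%N = 1.
Proof. by rewrite (size1_polyC (eq_leq (P_size 0%N))) coef_top. Qed.

Lemma basis1 : P 1%N = 'X + ((P 1%N)`_0)%:P.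
Proof.
have hs := size_sub_monic (monicX C) (size_polyX C) (eq_leq (P_size 1%N)).
rewrite coef_top scale1r in hs.
apply/eqP; rewrite addrC -subr_eq; apply/eqP.
by rewrite {1}(size1_polyC hs) coefB coefX subr0.
Qed.

Lemma coef_above n j : (n < j)%N -> (P n)`_j = 0.
Proof. by move=> lt_nj; rewrite nth_default ?P_size. Qed.

Lemma basis_expand n (p : {poly C}) :
  (size p <= n)%N -> exists c : nat -> C, p = \sum_(k < n) c k *: P k.
Proof.
elim: n p => [|n IH] p p_size.
  by exists (fun=> 0); rewrite big_ord0; apply/eqP; rewrite -size_poly_eq0 -leqn0.
have [c hc] := IH _ (size_sub_monic (P_monic n) (P_size n) p_size).
exists (fun k => if k == n then p`_n else c k).
rewrite big_ord_recr /= eqxx -[p in LHS](subrK (p`_n *: P n)) hc; congr (_ + _).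
by apply: eq_bigr => i _; rewrite (ltn_eqF (ltn_ord i)).
Qed.

End MonicBasis.

Section Orthogonality.
Variables (C : fieldType) (m : nat -> C) (P : nat -> {poly C}).
Hypotheses (P_monic : forall n, P n \is monic)
           (P_size : forall n, size (P n) = n.+1)
           (P_orth : forall n k, n != k -> lfun m (P n * P k) = 0).

Local Notation K n := (lfun m (P n * P n)).

Lemma lfun_ortho_sum j N (c : nat -> C) :
  lfun m (P j * \sum_(k < N) c k *: P k) = if (j < N)%N then c j * K j else 0.
Proof.
rewrite mulr_sumr linear_sum /=.
under eq_bigr => k _ do rewrite -scalerAr linearZ.
case: ifP => lt_jN.
  rewrite (bigD1 (Ordinal lt_jN)) //= big1 ?addr0 // => k ne_kj.
  by rewrite P_orth ?mulr0 //; apply: contraNneq ne_kj => e_jk; apply/eqP/val_inj.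
rewrite big1 // => k _ /=; rewrite P_orth ?mulr0 //.
by apply: contraFN lt_jN => /eqP ->.
Qed.

Lemma ortho_low n (p : {poly C}) : (size p <= n)%N -> lfun m (P n * p) = 0.
Proof.
move=> p_size; have [c ->] := basis_expand P_monic P_size p_size.
by rewrite lfun_ortho_sum ltnn.
Qed.

Lemma ortho_lead n (p : {poly C}) :
  (size p <= n.+1)%N -> lfun m (P n * p) = p`_n * K n.
Proof.
move=> p_size; rewrite -[p in LHS](subrK (p`_n *: P n)) mulrDr linearD /=.
by rewrite ortho_low ?size_sub_monic // add0r -scalerAr linearZ.
Qed.

Lemma size_XP n : size ('X * P n) = n.+2.
Proof. by rewrite -commr_polyX size_mulX ?monic_neq0 ?P_size. Qed.

Lemma ortho_shiftX n : lfun m (P n.+1 * ('X * P n)) = K n.+1.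
Proof. by rewrite ortho_lead ?size_XP // coefXM (coef_top P_monic P_size) mul1r. Qed.

Lemma size_prevP n : (size (prevP P n) <= n)%N.
Proof. by case: n => [|k] /=; rewrite ?size_poly0 ?P_size. Qed.

Lemma recurrence_size n (beta gamma : C) :
  beta = ('X * P n)`_n - (P n.+1)`_n ->
  (size ('X * P n - (P n.+1 + beta *: P n + gamma *: prevP P n))%R <= n)%N.
Proof.
move=> beta_def; set r := 'X * P n - P n.+1.
have r_size : (size r <= n.+1)%N.
  have := size_sub_monic (P_monic n.+1) (P_size n.+1) (eq_leq (size_XP n)).
  by rewrite coefXM /= (coef_top P_monic P_size) scale1r.
have -> : 'X * P n - (P n.+1 + beta *: P n + gamma *: prevP P n) =
          (r - r`_n *: P n) - gamma *: prevP P n.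
  by rewrite /r coefB -beta_def !opprD !addrA.
rewrite (leq_trans (size_polyD _ _)) // geq_max size_sub_monic //.
by rewrite size_polyN (leq_trans (size_scale_leq _ _)) ?size_prevP.
Qed.

Lemma norm1 : m 0%N * K 1%N = m 0%N * m 2%N - m 1%N ^+ 2.
Proof.
set q := (P 1%N)`_0; have P1 := basis1 P_monic P_size; rewrite -/q in P1.
have m1 : m 1%N = - (q * m 0%N).
  apply/eqP; rewrite -addr_eq0; apply/eqP.
  have := P_orth (isT : 1%N != 0%N).
  by rewrite (basis0 P_monic P_size) mulr1 P1 linearD /= lfunX lfunC.
have K1 : K 1%N = m 2%N + q * m 1%N.
  rewrite -[K _]mul1r -[1 in LHS](coefX C 1) -ortho_lead ?size_polyX //.
  by rewrite P1 mulrDl linearD /= -expr2 lfunXn lfunCM lfunX.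
by rewrite K1 m1; ring.
Qed.

Section Recurrence.
Variables (a b : nat -> C).
Hypothesis P_rec : forall n, 'X * P n = P n.+1 + b n *: P n + a n *: prevP P n.

Lemma recurrence_coef n : b n = ('X * P n)`_n - (P n.+1)`_n.
Proof.
rewrite P_rec !coefD !coefZ (coef_top P_monic P_size) mulr1.
rewrite [(prevP P n)`_n]nth_default ?size_prevP // mulr0 addr0; ring.
Qed.

Lemma recurrence_norm n : K n.+1 = a n.+1 * K n.
Proof.
have := congr1 (fun p => lfun m (P n * p)) (P_rec n.+1); rewrite /=.
have -> : P n * ('X * P n.+1) = P n.+1 * ('X * P n) by ring.
rewrite ortho_shiftX => ->.
have o2 : lfun m (P n * P n.+2) = 0 by apply: P_orth; lia.
have o1 : lfun m (P n * P n.+1) = 0 by apply: P_orth; lia.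
by rewrite !mulrDr !linearD /= -!scalerAr !linearZ /= o2 o1 mulr0 !add0r.
Qed.

End Recurrence.

Hypothesis P_norm : forall n, K n != 0.

Lemma ortho_unique N (p : {poly C}) :
  (size p <= N)%N -> (forall j, (j < N)%N -> lfun m (P j * p) = 0) -> p = 0.
Proof.
move=> p_size p_orth; have [c p_eq] := basis_expand P_monic P_size p_size.
rewrite p_eq big1 // => k _; have := p_orth k (ltn_ord k).
rewrite p_eq lfun_ortho_sum ltn_ord => /eqP.
by rewrite mulf_eq0 (negbTE (P_norm k)) orbF => /eqP ->; rewrite scale0r.
Qed.

Lemma smop_recurrence n (beta gamma : C) :
  beta = ('X * P n)`_n - (P n.+1)`_n ->
  (forall k, n = k.+1 -> gamma * K k = K n) ->
  'X * P n = P n.+1 + beta *: P n + gamma *: prevP P n.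
Proof.
move=> beta_def gamma_def; apply/eqP; rewrite -subr_eq0; apply/eqP.
apply: (ortho_unique (recurrence_size gamma beta_def)) => j lt_jn.
rewrite mulrBr !mulrDr linearB !linearD /= -!scalerAr !linearZ /=.
rewrite !P_orth ?mulr0 ?addr0 ?add0r; [|lia|lia].
have -> : P j * ('X * P n) = P n * ('X * P j) by ring.
have [e_n|ne_n] := eqVneq n j.+1.
  by subst n; rewrite /= ortho_shiftX -(gamma_def j) // subrr.
rewrite ortho_low ?size_XP; last by lia.
case: n lt_jn ne_n {beta_def gamma_def} => [|k] //= lt_jk ne_jk.
by rewrite P_orth ?mulr0 ?subrr //; lia.
Qed.

End Orthogonality.

Section QuadraticGeronimus.
Variables (C : fieldType) (u uh : nat -> C) (c : C).
Variables (P Q : nat -> {poly C}) (alpha : nat -> nat -> C).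
Hypotheses (P_smop : is_SMOP u P) (Q_smop : is_SMOP uh Q).
Let P_monic := P_smop.1.
Let P_size := P_smop.2.1.
Let P_orth := P_smop.2.2.1.
Let P_norm := P_smop.2.2.2.
Let Q_monic := Q_smop.1.
Let Q_size := Q_smop.2.1.
Let Q_orth := Q_smop.2.2.1.
Let Q_norm := Q_smop.2.2.2.
Hypothesis u_eq : forall p, lfun u p = lfun uh (('X - c%:P) ^+ 2 * p).
Hypothesis Q_expand : forall n, Q n = P n + \sum_(m < n) alpha n m *: P m.

Local Notation K n := (lfun u (P n * P n)).
Local Notation Kh n := (lfun uh (Q n * Q n)).
Local Notation w := (('X - c%:P) ^+ 2 : {poly C}).

Lemma Q_pair_P n k : (k < n)%N -> lfun u (Q n * P k) = alpha n k * K k.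
Proof.
move=> lt_kn; rewrite mulrC Q_expand mulrDr linearD /= (@P_orth k n) ?add0r.
  by rewrite (lfun_ortho_sum P_orth) lt_kn.
by rewrite neq_ltn lt_kn.
Qed.

Lemma pair_transfer n (p : {poly C}) :
  lfun u (Q n * p) = lfun uh (Q n * (w * p)).
Proof. by rewrite u_eq mulrCA. Qed.

Lemma monic_wP k : w * P k \is monic.
Proof. by rewrite monicMl ?P_monic // monic_exp // monicXsubC. Qed.

Lemma size_wP k : size (w * P k) = k.+3.
Proof.
by rewrite size_Mmonic ?P_size ?size_exp_XsubC // -size_poly_eq0 size_exp_XsubC.
Qed.

(* For m + 3 <= n, Q_n is uh-orthogonal to w P_m of degree m + 2, so alpha_{n,m} = 0. *)
Lemma alpha_vanish n k : (k + 3 <= n)%N -> alpha n k = 0.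
Proof.
move=> le_kn; have lt_kn : (k < n)%N by lia.
have := Q_pair_P lt_kn; rewrite pair_transfer (ortho_low Q_monic Q_size Q_orth).
  by move/esym/eqP; rewrite mulf_eq0 (negbTE (P_norm k)) orbF => /eqP.
by rewrite size_wP; lia.
Qed.

(* Pairing Q_{k+2} with the monic w P_k of degree k + 2 gives its norm. *)
Lemma normQ_shift k : Kh k.+2 = alpha k.+2 k * K k.
Proof.
have top : (w * P k)`_k.+2 = 1 by rewrite -(monicP (monic_wP k)) lead_coefE size_wP.
rewrite -Q_pair_P // pair_transfer.
by rewrite (ortho_lead Q_monic Q_size Q_orth (p := w * P k)) ?size_wP // top mul1r.
Qed.

(* Since hat K_{k+2} <> 0, alpha_{k+2,k} <> 0. *)
Lemma alpha_sub2_neq0 k : alpha k.+2 k != 0.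
Proof. by have := Q_norm k.+2; rewrite normQ_shift mulf_eq0 negb_or => /andP[]. Qed.

(* Only P_{k+1} and alpha_{k+1,k} P_k contribute to the degree-k coefficient of Q_{k+1}. *)
Lemma coefQ_sub1 k : (Q k.+1)`_k = (P k.+1)`_k + alpha k.+1 k.
Proof.
rewrite Q_expand coefD coef_sum big_ord_recr /= coefZ (coef_top P_monic P_size) mulr1.
by rewrite big1 ?add0r // => i _; rewrite coefZ (coef_above P_size) ?mulr0.
Qed.

Lemma hat_D_eq :
  u 0%N * uh 0%N - (uh 1%N - c * uh 0%N) ^+ 2 = uh 0%N * Kh 1%N.
Proof.
have u0 : u 0%N = uh 2%N - 2 * c * uh 1%N + c ^+ 2 * uh 0%N.
  have w_expand : w * 1 = 'X ^+ 2 - (2 * c)%:P * 'X + (c ^+ 2)%:P.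
    by rewrite mulr1 rmorphM rmorphXn /= rmorph_nat; ring.
  rewrite -lfun1 u_eq w_expand linearD linearB /=.
  by rewrite lfunCM lfunC lfunXn lfunX.
rewrite (norm1 Q_monic Q_size Q_orth) u0; ring.
Qed.

Section Recurrence.
Variables (a b : nat -> C).
Hypothesis P_rec : forall n, 'X * P n = P n.+1 + b n *: P n + a n *: prevP P n.

Lemma hat_b_coef n : hat_b b alpha n = ('X * Q n)`_n - (Q n.+1)`_n.
Proof.
rewrite /hat_b (recurrence_coef P_monic P_size P_rec) !coefXM coefQ_sub1.
by case: n => [|k] /=; rewrite ?coefQ_sub1; ring.
Qed.

Lemma hat_a_norm j : hat_a u uh c a alpha j.+1 * Kh j = Kh j.+1.
Proof.
have Q0 := basis0 Q_monic Q_size; have P0 := basis0 P_monic P_size.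
have uh0 : uh 0%N != 0 by have := Q_norm 0; rewrite Q0 mulr1 lfun1.
case: j => [|[|k]]; rewrite /hat_a /= ?hat_D_eq.
- by rewrite Q0 mulr1 lfun1; field.
- by rewrite normQ_shift P0 mulr1 lfun1; field; rewrite uh0 Q_norm.
- rewrite !normQ_shift (recurrence_norm P_monic P_size P_orth P_rec).
  by field; exact: alpha_sub2_neq0.
Qed.

End Recurrence.

End QuadraticGeronimus.

Theorem mainTheorem4 (R : realType) (u uh : nat -> R[i]) (c : R[i])
  (P Q : nat -> {poly R[i]}) (a b : nat -> R[i]) (alpha : nat -> nat -> R[i]) :
  quasi_definite u -> is_SMOP u P ->
  (forall n, 'X * P n = P n.+1 + b n *: P n + a n *: prevP P n) ->
  (forall n, (1 <= n)%N -> a n != 0) ->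
  quasi_definite uh -> is_SMOP uh Q ->
  (forall p, lfun u p = lfun uh (('X - c%:P) ^+ 2 * p)) ->
  (forall n, Q n = P n + \sum_(m < n) alpha n m *: P m) ->
  [/\ (forall n m, (m + 3 <= n)%N -> alpha n m = 0),
      (forall n, (2 <= n)%N -> alpha n (n - 2)%N != 0),
      Q 0%N = 1 &
      (forall n, 'X * Q n =
         Q n.+1 + hat_b b alpha n *: Q n + hat_a u uh c a alpha n *: prevP Q n)].
Proof.
move=> _ P_smop P_rec _ _ Q_smop u_eq Q_expand.
have [Q_monic [Q_size [Q_orth Q_norm]]] := Q_smop.
split.
- exact: (alpha_vanish P_smop Q_smop u_eq Q_expand).
- case=> [|[|k]] // _; rewrite subn2 /=.
  exact: (alpha_sub2_neq0 P_smop Q_smop u_eq Q_expand).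
- exact: basis0 Q_monic Q_size.
move=> n; apply: (smop_recurrence Q_monic Q_size Q_orth Q_norm).
- exact: (hat_b_coef P_smop Q_expand P_rec).
- by move=> k ->; apply: (hat_a_norm P_smop Q_smop u_eq Q_expand P_rec).
Qed.
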